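(* Let $H_0\subset H_1$ be dual $t$-motives, $H_0$ a $\bar k[t,\sigma]$-submodule of $H_1$, with $\dim_{\bar k}H_1/H_0<\infty$. Then there exists $0\ne a\in\mathbb F_q[t]$ with $aH_1\subset H_0$.
   Context: $\bar k$ is the algebraic closure of $k=\mathbb F_q(T)$ in $\mathbb C_\infty$; $t$ is a variable. $\bar k[t,\sigma]$ is the ring generated over $\bar k$ by a variable $t$ (central, commuting with $\bar k$ and $\sigma$) and a variable $\sigma$ with $\sigma x=x^{q^{-1}}\sigma$ for $x\in\bar k$. A dual $t$-motive is a left $\bar k[t,\sigma]$-module $H$ that is free of finite rank over $\bar k[t]$, free of finite rank over $\bar k[\sigma]$, and satisfies $(t-T)^nH\subset\sigma H$ for $n\gg0$. *)

From HB Require Import structures.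
From mathcomp Require Import all_boot all_order all_algebra.
Set Implicit Arguments. Unset Strict Implicit. Unset Printing Implicit Defensive.
Import GRing.Theory.
Local Open Scope ring_scope.

Section DualTMotive.
Variables (K : fieldType) (q : nat).

Definition inFq (x : K) : Prop := x ^+ q = x.

Definition inFqT (T c : K) : Prop :=
  exists g : {poly K}, (forall i, inFq g`_i) /\ c = g.[T].

(* K is (a model of) the algebraic closure of F_q(T):
   algebraically closed (type closedFieldType, given separately),
   T transcendental over F_q, every element algebraic over F_q(T)
   (denominators cleared: root of a nonzero polynomial with
   coefficients in F_q[T]). *)
Definition alg_closure_FqT (T : K) : Prop :=
  (forall g : {poly K}, (forall i, inFq g`_i) -> g != 0 -> g.[T] != 0) /\
  (forall x : K, exists P : {poly K},
      [/\ P != 0, (forall i, inFqT T P`_i) & root P x]).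

Variable H : lmodType K.

(* A left K[t,sigma]-module structure on the K-vector space H:
   tH is the action of t, sH the action of sigma;
   t is K-linear and commutes with sigma,
   sigma is additive and sigma (x h) = x^(1/q) sigma h, i.e.
   sigma (a^q h) = a sigma h. *)
Definition ktsigma_module (tH sH : H -> H) : Prop :=
  [/\ forall u v, tH (u + v) = tH u + tH v,
      forall (a : K) u, tH (a *: u) = a *: tH u,
      forall u v, sH (u + v) = sH u + sH v,
      forall (a : K) u, sH (a ^+ q *: u) = a *: sH u
    & forall u, tH (sH u) = sH (tH u)].

Definition tact (tH : H -> H) (f : {poly K}) (h : H) : H :=
  \sum_(i < size f) f`_i *: iter i tH h.

(* action of the skew polynomial sum_i f_i sigma^i (coefficients on the left);
   a {poly K} is used only as the list of coefficients *)
Definition sact (sH : H -> H) (f : {poly K}) (h : H) : H :=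
  \sum_(i < size f) f`_i *: iter i sH h.

Definition free_fin_rank (act : {poly K} -> H -> H) : Prop :=
  exists (r : nat) (b : 'I_r -> H), forall h : H,
    exists! f : {ffun 'I_r -> {poly K}}, h = \sum_(i < r) act (f i) (b i).

Definition dual_t_motive (T : K) (tH sH : H -> H) : Prop :=
  [/\ ktsigma_module tH sH,
      free_fin_rank (tact tH),
      free_fin_rank (sact sH)
    & exists n0 : nat, forall n, (n0 <= n)%N -> forall h : H,
        exists h' : H, iter n (fun u => tH u - T *: u) h = sH h'].

End DualTMotive.

(* iota : H0 -> H1 is an injective K[t,sigma]-linear map, i.e. H0 is
   (identified with) a K[t,sigma]-submodule of H1 *)
Definition ktsigma_embedding (K : fieldType) (H0 H1 : lmodType K)
    (t0 s0 : H0 -> H0) (t1 s1 : H1 -> H1) (iota : H0 -> H1) : Prop :=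
  [/\ injective iota,
      forall u v, iota (u + v) = iota u + iota v,
      forall (a : K) u, iota (a *: u) = a *: iota u,
      forall u, iota (t0 u) = t1 (iota u)
    & forall u, iota (s0 u) = s1 (iota u)].

(* dim_K (H1 / iota H0) < infinity *)
Definition fin_codim (K : fieldType) (H0 H1 : lmodType K) (iota : H0 -> H1) : Prop :=
  exists (m : nat) (v : 'I_m -> H1), forall h : H1,
    exists (c : 'I_m -> K) (h0 : H0), h = \sum_(i < m) c i *: v i + iota h0.

(* The f in k-bar[t] with f H1 ⊆ H0 form an ideal, which is nonzero because t acts
   on the finite-dimensional quotient H1/H0 (Cayley-Hamilton).  Let mu be its
   monic generator and F the q-th power Frobenius acting on coefficients; as k-bar
   is perfect, mu = F nu for some nu.  Since sigma (f h) = F^-1(f) (sigma h) and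
   (t - T)^n H ⊆ sigma H, both nu (t - T)^n and F(mu) (t - T^q)^n lie in the ideal
   (the latter because sigma is injective, by freeness over k-bar[sigma]).  Hence
   F(mu) | mu (t - T^q)^n and mu | F(mu) (t - T^q)^n, which for monic polynomials of
   the same degree forces F(mu) = mu, i.e. mu has coefficients in F_q.  No property
   of T is needed. *)

From HB Require Import structures.
From mathcomp Require Import all_boot all_order all_algebra.
From Stdlib Require Import Classical.
Import GRing.Theory.
Local Open Scope ring_scope.

Set Implicit Arguments. Unset Strict Implicit. Unset Printing Implicit Defensive.

Section PolyAction.
Variables (K : fieldType) (H : lmodType K) (A : H -> H).
Implicit Types (f g : {poly K}) (h u v : H) (c : K).

Lemma tact_widen n f h : (size f <= n)%N ->
  tact A f h = \sum_(i < n) f`_i *: iter i A h.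
Proof.
move=> le_f_n; rewrite /tact (big_ord_widen n (fun i => f`_i *: iter i A h)) //.
rewrite big_mkcond; apply: eq_bigr => i _; case: ifP => // /negbT.
by rewrite -leqNgt => le_f_i; rewrite nth_default ?scale0r.
Qed.

Lemma tactD f g h : tact A (f + g) h = tact A f h + tact A g h.
Proof.
have le_fg := leq_trans (size_polyD f g).
rewrite !(@tact_widen (maxn (size f) (size g))) ?leq_maxl ?leq_maxr ?le_fg //.
by rewrite -big_split; apply: eq_bigr => i _; rewrite coefD scalerDl.
Qed.

Lemma tactZ c f h : tact A (c *: f) h = c *: tact A f h.
Proof.
rewrite !(@tact_widen (size f)) ?size_scale_leq // scaler_sumr.
by apply: eq_bigr => i _; rewrite coefZ scalerA.
Qed.

Lemma tactB f g h : tact A (f - g) h = tact A f h - tact A g h.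
Proof. by rewrite tactD -(scaleN1r g) tactZ scaleN1r. Qed.

Lemma tactC c h : tact A c%:P h = c *: h.
Proof. by rewrite (@tact_widen 1) ?size_polyC ?leq_b1 // big_ord1 coefC. Qed.

Lemma tact0 h : tact A 0 h = 0.
Proof. by rewrite /tact size_poly0 big_ord0. Qed.

Lemma tactXM f h : tact A ('X * f) h = tact A f (A h).
Proof.
rewrite (@tact_widen (size f).+1); last first.
  by rewrite mulrC (leq_trans (size_polyMleq _ _)) // size_polyX addn2.
rewrite big_ord_recl coefXM eqxx scale0r add0r /tact.
by apply: eq_bigr => i _; rewrite coefXM /= -iterSr.
Qed.

Section LinearOperator.
Hypotheses (AD : {morph A : u v / u + v}) (AZ : forall c, {morph A : u / c *: u}).

Lemma tact_is_linear f : linear (tact A f).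
Proof.
have iterA i c u v : iter i A (c *: u + v) = c *: iter i A u + iter i A v.
  by elim: i => //= i ->; rewrite AD AZ.
move=> c u v; rewrite /tact scaler_sumr -big_split.
by apply: eq_bigr => i _; rewrite iterA scalerDr !scalerA mulrC.
Qed.

Lemma tactDr f u v : tact A f (u + v) = tact A f u + tact A f v.
Proof. by rewrite -[u in LHS]scale1r tact_is_linear scale1r. Qed.

Lemma tactBr f u v : tact A f (u - v) = tact A f u - tact A f v.
Proof. by rewrite addrC -scaleN1r tact_is_linear scaleN1r addrC. Qed.

Lemma tact_comm f h : tact A f (A h) = A (tact A f h).
Proof.
have A0 : A 0 = 0 by have := AZ 0 0; rewrite !scale0r.
rewrite /tact (big_morph A AD A0); apply: eq_bigr => i _.
by rewrite AZ -iterSr.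
Qed.

Lemma tactM f g h : tact A (f * g) h = tact A f (tact A g h).
Proof.
elim/poly_ind: f g h => [|f c IH] g h; first by rewrite mul0r !tact0.
rewrite mulrDl -mulrA mul_polyC tactD tactZ IH tactXM tactD tactC.
by rewrite mulrC tactXM tact_comm.
Qed.

Lemma tact_XsubC_exp c n h :
  tact A (('X - c%:P) ^+ n) h = iter n (fun u => A u - c *: u) h.
Proof.
elim: n => [|n IH]; first by rewrite expr0 tactC scale1r.
by rewrite exprS tactM IH tactB -['X]mulr1 tactXM !tactC scale1r.
Qed.

End LinearOperator.

Lemma tact_intertwine (H' : lmodType K) (A' : H' -> H') (B : H -> H')
    (BD : {morph B : u v / u + v}) (BZ : forall c, {morph B : u / c *: u})
    (BA : forall u, B (A u) = A' (B u)) f h :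
  B (tact A f h) = tact A' f (B h).
Proof.
have B0 : B 0 = 0 by have := BZ 0 0; rewrite !scale0r.
have iterB i u : B (iter i A u) = iter i A' (B u) by elim: i => //= i <-.
rewrite /tact (big_morph B BD B0); apply: eq_bigr => i _.
by rewrite BZ iterB.
Qed.

Lemma tact_semilinear (F : {rmorphism K -> K}) (S : H -> H)
    (SD : {morph S : u v / u + v}) (SZ : forall c u, S (F c *: u) = c *: S u)
    (AS : forall u, A (S u) = S (A u)) f h :
  tact A f (S h) = S (tact A (map_poly F f) h).
Proof.
have S0 : S 0 = 0 by have := SZ 0 0; rewrite rmorph0 !scale0r.
have iterS i u : iter i A (S u) = S (iter i A u) by elim: i => //= i ->.
rewrite /tact size_map_inj_poly ?(big_morph S SD S0) ?rmorph0 //; last exact: fmorph_inj.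
by apply: eq_bigr => i _; rewrite coef_map SZ iterS.
Qed.

End PolyAction.

Section Frobenius.
Variables (K : fieldType) (q : nat).

(* The proof argument only serves to key the morphism instances below. *)
Definition frob (_ : [pchar K].-nat q) (x : K) := x ^+ q.

Variable (charKq : [pchar K].-nat q).

Lemma frob_is_nmod_morphism : nmod_morphism (frob charKq).
Proof.
split; first by rewrite /frob expr0n; case: q charKq.
by move=> x y; apply: exprDn_pchar.
Qed.

Lemma frob_is_monoid_morphism : monoid_morphism (frob charKq).
Proof. by split=> [|x y]; rewrite /frob ?expr1n ?exprMn. Qed.

HB.instance Definition _ := GRing.isNmodMorphism.Build K K (frob charKq)
  frob_is_nmod_morphism.
HB.instance Definition _ := GRing.isMonoidMorphism.Build K K (frob charKq)
  frob_is_monoid_morphism.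

End Frobenius.

Lemma pchar_pnat_exp (K : fieldType) p e : p \in [pchar K] -> [pchar K].-nat (p ^ e)%N.
Proof.
move=> charKp; rewrite pnatX (eq_pnat _ (pcharf_eq charKp)).
by rewrite pnat_id ?(pcharf_prime charKp).
Qed.

Lemma frob_surj (K : closedFieldType) q (charKq : [pchar K].-nat q) a :
  exists r, frob charKq r = a.
Proof.
have q_gt0 : (0 < q)%N by case/andP: charKq.
have [x xq] := @solve_monicpoly K q (fun i => if i == 0%N then a else 0) q_gt0.
exists x; rewrite /frob xq; move: q_gt0; clear xq charKq; case: q => // k _.
by rewrite big_ord_recl /= expr0 mulr1 big1 ?addr0 // => i _; rewrite mul0r.
Qed.

Lemma map_poly_surj (K : fieldType) (F : {rmorphism K -> K}) :
  (forall a, exists r, F r = a) -> forall g : {poly K}, exists nu, map_poly F nu = g.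
Proof.
move=> F_surj g.
have /fin_all_exists [r Fr] i : exists r, F r = g`_(i : 'I_(size g)) := F_surj _.
exists (\poly_(i < size g) (if insub i is Some j then r j else 0)); apply/polyP => i.
rewrite coef_map coef_poly; case: ltnP => [lt_i_g | le_g_i].
  by rewrite insubT; apply: Fr.
by rewrite raddf0 nth_default.
Qed.

Section PolyIdeal.
Variables (K : fieldType) (P : {poly K} -> Prop).
Hypotheses (P_sub : forall f g, P f -> P g -> P (f - g))
           (P_mull : forall f g, P g -> P (f * g)).

Lemma poly_ideal_min_size : (exists2 f, f != 0 & P f) ->
  exists g, [/\ g != 0, P g & forall r, P r -> r != 0 -> (size g <= size r)%N].
Proof.
case=> f; move: {2}(size f) (leqnn (size f)) => N.
elim: N f => [|N IH] f le_f_N f_neq0 Pf.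
  by move: f_neq0; rewrite -size_poly_eq0 -leqn0 le_f_N.
have [[r [Pr r_neq0 lt_r_f]] | no_smaller] :=
  classic (exists r, [/\ P r, r != 0 & (size r < size f)%N]).
  by apply: (IH r) => //; rewrite -ltnS (leq_trans lt_r_f).
exists f; split=> // r Pr r_neq0; rewrite leqNgt; apply/negP => lt_r_f.
by apply: no_smaller; exists r.
Qed.

Lemma poly_ideal_monic_generator : (exists2 f, f != 0 & P f) ->
  exists mu, [/\ mu \is monic, P mu & forall r, P r -> mu %| r].
Proof.
move=> /poly_ideal_min_size [g [g_neq0 Pg g_min]].
have lg_neq0 : lead_coef g != 0 by rewrite lead_coef_eq0.
exists ((lead_coef g)^-1 *: g); split.
- by rewrite monicE lead_coefZ mulVf.
- by rewrite -mul_polyC; apply: P_mull.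
move=> r Pr; rewrite dvdpZl ?invr_eq0 //; apply/modp_eq0P/eqP.
apply: contraT => mod_neq0.
have Pmod : P (r %% g).
  have -> : r %% g = r - (r %/ g) * g by rewrite {2}(divp_eq r g) addrC addKr.
  by apply: P_sub => //; apply: P_mull.
by have := g_min _ Pmod mod_neq0; rewrite leqNgt ltn_modp g_neq0.
Qed.

End PolyIdeal.

Lemma monic_eq_of_dvdp_XsubC_exp (K : fieldType) (c : K) n (p r : {poly K}) :
    p \is monic -> r \is monic -> size p = size r ->
    p %| r * ('X - c%:P) ^+ n -> r %| p * ('X - c%:P) ^+ n ->
  p = r.
Proof.
have eq_dvdp u v : u \is monic -> v \is monic -> size u = size v -> u %| v -> u = v.
  by move=> mu mv suv duv; apply/eqP; rewrite -eqp_monic // -dvdp_size_eqp // suv.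
have coprime_XsubC_exp u : ~~ root u c -> coprimep u (('X - c%:P) ^+ n).
  by move=> nuc; rewrite coprimep_expr ?coprimep_XsubC.
move: {2}(size p) (leqnn (size p)) => N.
elim: N p r => [|N IH] p r le_p_N mp mr spr dpr drp.
  by move: le_p_N; rewrite leqn0 size_poly_eq0 (negbTE (monic_neq0 mp)).
have [pc | npc] := boolP (root p c); last first.
  by apply: eq_dvdp; rewrite // -(Gauss_dvdpl _ (coprime_XsubC_exp _ npc)).
have [rc | nrc] := boolP (root r c); last first.
  by symmetry; apply: eq_dvdp; rewrite // -(Gauss_dvdpl _ (coprime_XsubC_exp _ nrc)).
case/factor_theorem: pc => p' def_p; case/factor_theorem: rc => r' def_r; subst p r.
have monic_XsubC_mul u : (u * ('X - c%:P) \is monic) = (u \is monic).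
  exact: monicMr (monicXsubC c).
have size_XsubC_mul u : u \is monic -> size (u * ('X - c%:P)) = (size u).+1.
  by move=> mu; rewrite size_Mmonic ?monic_neq0 ?monicXsubC // size_XsubC addn2.
rewrite !monic_XsubC_mul in mp mr.
rewrite !size_XsubC_mul // in spr le_p_N.
rewrite !(mulrAC _ ('X - c%:P)) !dvdp_mul2r ?polyXsubC_eq0 // in dpr drp.
by rewrite (IH p' r') //; case: spr.
Qed.

Section QuotientAnnihilator.
Variables (K : fieldType) (H0 H1 : lmodType K) (t0 : H0 -> H0) (t1 : H1 -> H1)
  (iota : H0 -> H1).
Hypotheses (t1D : {morph t1 : u v / u + v}) (t1Z : forall c, {morph t1 : u / c *: u})
  (iotaD : {morph iota : u v / u + v}) (iotaZ : forall c, {morph iota : u / c *: u})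
  (iota_t : forall u, iota (t0 u) = t1 (iota u)).

Definition in_H0 (x : H1) := exists y, x = iota y.

Definition kills (f : {poly K}) := forall h, in_H0 (tact t1 f h).

Lemma in_H0_0 : in_H0 0.
Proof. by exists 0; have := iotaZ 0 0; rewrite !scale0r. Qed.

Lemma in_H0D x y : in_H0 x -> in_H0 y -> in_H0 (x + y).
Proof. by move=> [a ->] [b ->]; exists (a + b); rewrite iotaD. Qed.

Lemma in_H0Z c x : in_H0 x -> in_H0 (c *: x).
Proof. by move=> [a ->]; exists (c *: a); rewrite iotaZ. Qed.

Lemma in_H0B x y : in_H0 x -> in_H0 y -> in_H0 (x - y).
Proof. by move=> Hx /(in_H0Z (-1)); rewrite scaleN1r; apply: in_H0D. Qed.

Lemma in_H0_sum (I : finType) (F : I -> H1) :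
  (forall i, in_H0 (F i)) -> in_H0 (\sum_i F i).
Proof. by move=> HF; apply: (big_ind in_H0) => //; [apply: in_H0_0 | apply: in_H0D]. Qed.

Lemma in_H0_tact f x : in_H0 x -> in_H0 (tact t1 f x).
Proof.
by move=> [a ->]; exists (tact t0 f a); rewrite (tact_intertwine iotaD iotaZ iota_t).
Qed.

Lemma kills_sub f g : kills f -> kills g -> kills (f - g).
Proof. by move=> kf kg h; rewrite tactB; apply: in_H0B. Qed.

Lemma kills_mull f g : kills g -> kills (f * g).
Proof. by move=> kg h; rewrite (tactM t1D t1Z); apply: in_H0_tact. Qed.

Section CayleyHamilton.
Variables (N : nat) (w : 'I_N.+1 -> H1) (M : 'M[K]_N.+1).
Hypothesis t1_w : forall i, in_H0 (t1 (w i) - \sum_j M i j *: w j).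

Let comb (c : 'rV[K]_N.+1) := \sum_j c 0 j *: w j.

Let combD c d : comb (c + d) = comb c + comb d.
Proof. by rewrite /comb -big_split; apply: eq_bigr => j _; rewrite mxE scalerDl. Qed.

Let combZ a c : comb (a *: c) = a *: comb c.
Proof. by rewrite /comb scaler_sumr; apply: eq_bigr => j _; rewrite mxE scalerA. Qed.

Lemma in_H0_t1_comb c : in_H0 (t1 (comb c) - comb (c *m M)).
Proof.
have t10 : t1 0 = 0 by have := t1Z 0 0; rewrite !scale0r.
suff -> : t1 (comb c) - comb (c *m M) =
    \sum_k c 0 k *: (t1 (w k) - \sum_j M k j *: w j).
  by apply: in_H0_sum => k; apply: in_H0Z.
rewrite /comb (big_morph t1 t1D t10) (eq_bigr _ (fun k _ => scalerBr _ _ _)) sumrB.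
congr (_ - _); first by apply: eq_bigr => k _; rewrite t1Z.
rewrite (eq_bigr (fun j => \sum_k (c 0 k * M k j) *: w j)); last first.
  by move=> j _; rewrite !mxE scaler_suml.
rewrite exchange_big /=; apply: eq_bigr => k _.
by rewrite scaler_sumr; apply: eq_bigr => j _; rewrite scalerA.
Qed.

Lemma in_H0_tact_comb p c : in_H0 (tact t1 p (comb c) - comb (c *m horner_mx M p)).
Proof.
elim/poly_ind: p c => [|p d IH] c.
  rewrite tact0 rmorph0 mulmx0 -(scale0r (0 : 'rV_N.+1)) combZ scale0r subrr.
  exact: in_H0_0.
rewrite tactD tactC mulrC tactXM rmorphD rmorphM /= horner_mx_X horner_mx_C.
rewrite mulmxDr mul_mx_scalar combD combZ -mulmxE mulmxA.
have -> : tact t1 p (t1 (comb c)) + d *: comb c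
          - (comb (c *m M *m horner_mx M p) + d *: comb c)
        = tact t1 p (t1 (comb c) - comb (c *m M))
          + (tact t1 p (comb (c *m M)) - comb (c *m M *m horner_mx M p)).
  by rewrite (tactBr t1D t1Z) opprD addrACA subrr addr0 addrA subrK.
by apply: in_H0D; [apply: in_H0_tact; apply: in_H0_t1_comb | apply: IH].
Qed.

Lemma char_poly_kills :
  (forall h, exists c : 'I_N.+1 -> K, in_H0 (h - \sum_i c i *: w i)) ->
  kills (char_poly M).
Proof.
move=> w_span h; have [c Hc] := w_span h.
have -> : h = (h - comb (\row_j c j)) + comb (\row_j c j) by rewrite subrK.
rewrite (tactDr t1D t1Z); apply: in_H0D.
  by apply: in_H0_tact; congr (in_H0 (_ - _)): Hc; apply: eq_bigr => j _; rewrite mxE.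
have := in_H0_tact_comb (char_poly M) (\row_j c j).
by rewrite Cayley_Hamilton mulmx0 -(scale0r (0 : 'rV_N.+1)) combZ scale0r subr0.
Qed.

End CayleyHamilton.

Lemma kills_nonzero_of_fin_codim : fin_codim iota -> exists2 f, f != 0 & kills f.
Proof.
case=> [[|m] [v v_span]].
  exists 1; rewrite ?oner_eq0 // => h; have [c [h0 ->]] := v_span h.
  by rewrite -polyC1 tactC scale1r big_ord0 add0r; exists h0.
have /fin_all_exists [M t1_v] : forall i, exists c : 'I_m.+1 -> K,
    in_H0 (t1 (v i) - \sum_j c j *: v j).
  by move=> i; have [c [h0 ->]] := v_span (t1 (v i)); exists c, h0; rewrite addrC addKr.
exists (char_poly (\matrix_(i, j) M i j)); first exact: monic_neq0 (char_poly_monic _).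
apply: char_poly_kills => [i | h].
  by congr (in_H0 (_ - _)): (t1_v i); apply: eq_bigr => j _; rewrite mxE.
by have [c [h0 ->]] := v_span h; exists c; rewrite addrC addKr; exists h0.
Qed.

End QuotientAnnihilator.

Lemma semilinear_free_injective (K : fieldType) (F : {rmorphism K -> K})
    (F_surj : forall a, exists r, F r = a) (H : lmodType K) (S : H -> H)
    (SD : {morph S : u v / u + v}) (SZ : forall c u, S (F c *: u) = c *: S u) :
  free_fin_rank (sact S) -> injective S.
Proof.
have sactE f h : sact S f h = tact S f h by [].
case=> r [b b_basis]; have S0 : S 0 = 0 by have := SZ 0 0; rewrite rmorph0 !scale0r.
suff S_ker0 x : S x = 0 -> x = 0.
  move=> x y Sxy; apply/eqP; rewrite -subr_eq0; apply/eqP/S_ker0.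
  by apply: (addIr (S y)); rewrite -SD subrK Sxy add0r.
move=> Sx0; have [f [def_x _]] := b_basis x.
have /fin_all_exists [nu Fnu] i := map_poly_surj F_surj (f i).
have Sx_X : S x = \sum_i sact S ([ffun j => 'X * nu j] i) (b i).
  rewrite def_x (big_morph S SD S0); apply: eq_bigr => i _.
  by rewrite ffunE !sactE -Fnu -(tact_semilinear SD SZ) // tactXM.
have Sx_0 : S x = \sum_i sact S ([ffun=> 0] i) (b i).
  by rewrite Sx0 big1 // => i _; rewrite ffunE sactE tact0.
have [g [_ g_uniq]] := b_basis (S x).
have /ffunP coef_eq := etrans (esym (g_uniq _ Sx_X)) (g_uniq _ Sx_0).
rewrite def_x big1 // => i _; have /eqP := coef_eq i.
rewrite !ffunE mulf_eq0 polyX_eq0 /= -Fnu => /eqP ->.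
by rewrite raddf0 sactE tact0.
Qed.

Section FrobeniusTwist.
Variables (K : fieldType) (F : {rmorphism K -> K}) (H0 H1 : lmodType K)
  (t0 s0 : H0 -> H0) (t1 s1 : H1 -> H1) (iota : H0 -> H1).
Hypotheses (F_surj : forall a, exists r, F r = a)
  (t0D : {morph t0 : u v / u + v}) (t0Z : forall c, {morph t0 : u / c *: u})
  (t1D : {morph t1 : u v / u + v}) (t1Z : forall c, {morph t1 : u / c *: u})
  (iotaD : {morph iota : u v / u + v}) (iotaZ : forall c, {morph iota : u / c *: u})
  (iota_t : forall u, iota (t0 u) = t1 (iota u))
  (s1D : {morph s1 : u v / u + v}) (s1Z : forall c u, s1 (F c *: u) = c *: s1 u)
  (t1_s1 : forall u, t1 (s1 u) = s1 (t1 u))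
  (iota_s : forall u, iota (s0 u) = s1 (iota u))
  (s1_inj : injective s1).
Variables (T : K) (n : nat).
Hypotheses (s0_div : forall h, exists h', iter n (fun u => t0 u - T *: u) h = s0 h')
           (s1_div : forall h, exists h', iter n (fun u => t1 u - T *: u) h = s1 h').

Local Notation kills := (kills t1 iota).

Lemma kills_frob_preimage_mul mu nu :
  kills mu -> map_poly F nu = mu -> kills (nu * ('X - T%:P) ^+ n).
Proof.
move=> kmu Fnu h; rewrite (tactM t1D t1Z) (tact_XsubC_exp t1D t1Z).
have [h' ->] := s1_div h; rewrite (tact_semilinear s1D s1Z t1_s1) Fnu.
by have [y ->] := kmu h'; exists (s0 y).
Qed.

Lemma kills_frob_mul mu : kills mu -> kills (map_poly F mu * ('X - (F T)%:P) ^+ n).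
Proof.
move=> kmu h; have [y mu_s1h] := kmu (s1 h); have [y' def_y'] := s0_div y.
exists y'; apply: s1_inj.
rewrite -iota_s -def_y' -(tact_XsubC_exp t0D t0Z) (tact_intertwine iotaD iotaZ iota_t).
rewrite -mu_s1h -(tactM t1D t1Z) (tact_semilinear s1D s1Z t1_s1).
by rewrite rmorphM rmorphXn /= map_polyXsubC mulrC.
Qed.

Lemma annihilator_generator_frob_fixed mu : mu \is monic -> kills mu ->
  (forall r, kills r -> mu %| r) -> map_poly F mu = mu.
Proof.
move=> mu_monic kmu mu_gen; have [nu Fnu] := map_poly_surj F_surj mu.
have mu_dvd_twist := mu_gen _ (kills_frob_mul kmu).
have := mu_gen _ (kills_frob_preimage_mul kmu Fnu).
rewrite -(dvdp_map F) rmorphM rmorphXn /= map_polyXsubC Fnu => twist_dvd_mu.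
apply: (@monic_eq_of_dvdp_XsubC_exp _ (F T) n) => //.
- by rewrite map_monic.
- exact: size_map_poly.
Qed.

End FrobeniusTwist.

Theorem theorem4 (p e q : nat) (Hp : prime p) (He : (0 < e)%N) (Hq : q = (p ^ e)%N)
  (K : closedFieldType) (HpK : p \in [pchar K]) (T : K)
  (HK : alg_closure_FqT q T)
  (H0 H1 : lmodType K) (t0 s0 : H0 -> H0) (t1 s1 : H1 -> H1) (iota : H0 -> H1)
  (HM0 : dual_t_motive q T t0 s0) (HM1 : dual_t_motive q T t1 s1)
  (Hsub : ktsigma_embedding t0 s0 t1 s1 iota)
  (Hfin : fin_codim iota) :
  exists a : {poly K},
    [/\ a != 0, (forall i, inFq q a`_i)
      & forall h : H1, exists h0 : H0, tact t1 a h = iota h0].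
Proof.
have charKq : [pchar K].-nat q by rewrite Hq pchar_pnat_exp.
have F_surj := frob_surj charKq.
case: HM0 => [[t0D t0Z _ _ _] _ _ [n0 s0_div]].
case: HM1 => [[t1D t1Z s1D s1Z t1_s1] _ s1_free [n1 s1_div]].
case: Hsub => [_ iotaD iotaZ iota_t iota_s].
have s1_inj := semilinear_free_injective F_surj s1D s1Z s1_free.
have [mu [mu_monic kmu mu_gen]] := poly_ideal_monic_generator
  (kills_sub iotaD iotaZ) (kills_mull t1D t1Z iotaD iotaZ iota_t)
  (kills_nonzero_of_fin_codim t1D t1Z iotaD iotaZ iota_t Hfin).
have mu_fixed := annihilator_generator_frob_fixed F_surj t0D t0Z t1D t1Z
  iotaD iotaZ iota_t s1D s1Z t1_s1 iota_s s1_inj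
  (s0_div _ (leq_maxl n0 n1)) (s1_div _ (leq_maxr n0 n1)) mu_monic kmu mu_gen.
exists mu; split=> [|i|]; first exact: monic_neq0.
  by rewrite /inFq -[in RHS]mu_fixed coef_map.
exact: kmu.
Qed.
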